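(* Let $A$ be a domain which satisfies the ascending chain condition on completely prime ideals (every ascending chain of completely prime ideals of $A$ stabilizes). Then $A$ is Hopfian.
   Context: A two-sided ideal $P$ of $A$ is \emph{completely prime} if $A/P$ is a domain. A ring $A$ is \emph{Hopfian} if $A$ is not isomorphic (as a ring) to $A/J$ for any nonzero two-sided ideal $J \triangleleft A$. *)

From HB Require Import structures.
From mathcomp Require Import all_boot all_order all_algebra.
Set Implicit Arguments. Unset Strict Implicit. Unset Printing Implicit Defensive.
Import GRing.Theory.
Local Open Scope ring_scope.

Definition is_domain (R : pzRingType) : Prop :=
  (1 : R) <> 0 /\ forall x y : R, x * y = 0 -> x = 0 \/ y = 0.

Definition two_sided_ideal (A : pzRingType) (J : A -> Prop) : Prop :=
  [/\ J 0,
      (forall x y, J x -> J y -> J (x + y)),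
      (forall x, J x -> J (- x)),
      (forall a x, J x -> J (a * x)) &
      (forall a x, J x -> J (x * a))].

(* (R, pi) is a presentation of the quotient ring A/J: pi is a surjective
   ring morphism whose kernel is exactly J. *)
Definition is_quotient_by (A : pzRingType) (J : A -> Prop)
    (R : pzRingType) (pi : {rmorphism A -> R}) : Prop :=
  (forall r : R, exists a : A, pi a = r) /\ (forall x : A, pi x = 0 <-> J x).

Definition completely_prime (A : pzRingType) (P : A -> Prop) : Prop :=
  two_sided_ideal P /\
  exists (R : pzRingType) (pi : {rmorphism A -> R}),
    @is_quotient_by A P R pi /\ is_domain R.

Definition acc_completely_prime (A : pzRingType) : Prop :=
  forall P : nat -> (A -> Prop),
    (forall n, completely_prime (P n)) ->
    (forall n x, P n x -> P n.+1 x) ->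
    exists N : nat, forall n, (N <= n)%N -> forall x, P n x <-> P N x.

Definition ring_isomorphic (A R : pzRingType) : Prop :=
  exists f : {rmorphism A -> R}, bijective f.

Definition hopfian (A : pzRingType) : Prop :=
  forall J : A -> Prop, two_sided_ideal J -> (exists x, J x /\ x <> 0) ->
  ~ exists (R : pzRingType) (pi : {rmorphism A -> R}),
      @is_quotient_by A J R pi /\ ring_isomorphic A R.

(* If A is isomorphic to A/J via f, then [phi := f^-1 \o (A ->> A/J)] is a
   surjective endomorphism of A with kernel J.  Each iterate phi^n is again
   surjective, so A/ker(phi^n) is isomorphic to the domain A and ker(phi^n) is
   completely prime.  These kernels increase; once they stabilise at N, an
   element y with phi^N y = x in J satisfies phi^(N+1) y = 0, hence
   phi^N y = 0, so x = 0.  Thus J = 0. *)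
From HB Require Import structures.
From mathcomp Require Import all_boot all_order all_algebra.
Set Implicit Arguments. Unset Strict Implicit. Unset Printing Implicit Defensive.
Import GRing.Theory.
Local Open Scope ring_scope.

Section Kernel.
Variables (A R : pzRingType) (h : {rmorphism A -> R}).

Lemma rmorph_kernel_ideal : two_sided_ideal (fun x => h x = 0).
Proof.
split=> [|x y hx hy|x hx|a x hx|a x hx].
- exact: rmorph0.
- by rewrite rmorphD hx hy addr0.
- by rewrite rmorphN hx oppr0.
- by rewrite rmorphM hx mulr0.
- by rewrite rmorphM hx mul0r.
Qed.

Lemma surjective_rmorph_kernel_completely_prime :
  (forall r, exists a, h a = r) -> is_domain R ->
  completely_prime (fun x => h x = 0).
Proof.
move=> h_surj dR; split; first exact: rmorph_kernel_ideal.
by exists R, h.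
Qed.

End Kernel.

Section Inverse.
Variables (A R : pzRingType) (f : {rmorphism A -> R}) (g : R -> A).
Hypotheses (fK : cancel f g) (gK : cancel g f).

Definition rmorph_inv of cancel f g & cancel g f : R -> A := g.

HB.instance Definition _ :=
  GRing.isZmodMorphism.Build R A (rmorph_inv fK gK) (can2_zmod_morphism fK gK).
HB.instance Definition _ :=
  GRing.isMonoidMorphism.Build R A (rmorph_inv fK gK) (can2_monoid_morphism fK gK).

End Inverse.

Section Iterate.
Variables (A : pzRingType) (h : {rmorphism A -> A}).

Definition rmorph_iter (n : nat) : A -> A := iter n h.

Lemma rmorph_iterB n : zmod_morphism (rmorph_iter n).
Proof. by elim: n => [|n IHn] x y //=; rewrite IHn rmorphB. Qed.

Lemma rmorph_iter_monoid n : monoid_morphism (rmorph_iter n).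
Proof.
elim: n => [|n [IH1 IHM]] //; split=> [|x y] /=; first by rewrite IH1 rmorph1.
by rewrite IHM rmorphM.
Qed.

HB.instance Definition _ n :=
  GRing.isZmodMorphism.Build A A (rmorph_iter n) (rmorph_iterB n).
HB.instance Definition _ n :=
  GRing.isMonoidMorphism.Build A A (rmorph_iter n) (rmorph_iter_monoid n).

Lemma rmorph_iterSr n x : rmorph_iter n.+1 x = rmorph_iter n (h x).
Proof. exact: iterSr. Qed.

Lemma surjective_rmorph_iter n :
  (forall y, exists x, h x = y) -> forall y, exists x, rmorph_iter n x = y.
Proof.
move=> h_surj; elim: n => [|n IHn] y; first by exists y.
have [w <-] := IHn y; have [x <-] := h_surj w.
by exists x; rewrite rmorph_iterSr.
Qed.

End Iterate.

Lemma surjective_endomorphism_injective (A : pzRingType) :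
  is_domain A -> acc_completely_prime A ->
  forall h : {rmorphism A -> A}, (forall y, exists x, h x = y) ->
  forall x, h x = 0 -> x = 0.
Proof.
move=> dA acc h h_surj x hx0.
pose P n x := rmorph_iter h n x = 0.
have P_prime n : completely_prime (P n).
  exact/surjective_rmorph_kernel_completely_prime/dA/surjective_rmorph_iter.
have P_chain n y : P n y -> P n.+1 y by rewrite /P /= => ->; rewrite rmorph0.
have [N stableN] := acc P P_prime P_chain.
have [y hyx] := surjective_rmorph_iter N h_surj x.
have PSy : P N.+1 y by rewrite /P /= hyx.
by rewrite -hyx; apply/(stableN N.+1 (leqnSn N)).
Qed.

Theorem mainTheorem3 (A : pzRingType) :
  is_domain A -> acc_completely_prime A -> hopfian A.
Proof.
move=> dA acc J _ [x [Jx x_neq0]] [R [pi [[pi_surj pi_ker] [f [g fK gK]]]]].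
pose phi : {rmorphism A -> A} := rmorph_inv fK gK \o pi.
have phi_surj y : exists z, phi z = y.
  by have [z piz] := pi_surj (f y); exists z; rewrite /= piz /rmorph_inv fK.
apply/x_neq0/(surjective_endomorphism_injective dA acc phi_surj).
by rewrite /= (pi_ker x).2 // rmorph0.
Qed.
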